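(* Let $D$ be a distribution over $\mathcal{X}\times\mathcal{Y}$ ($\mathcal{X}\subset\mathbb{R}^d$, $\mathcal{Y}=\{1,\dots,c\}$) that is $(k_1,\dots,k_n)$-separable with $\delta$-margin, and let $K=\prod_{s=1}^n k_s$. Then there exists a 4-layer network $g:\mathcal{X}\to\mathbb{R}^c$ of the form $$p^s(x)=\sum_{l=1}^{k_s} v_{s,l}\,\rho(u_s^Tx-\beta_{s,l})\ (s=1,\dots,n),\qquad g(x)=W^T\big(\rho(u^Tp(x)-\gamma_1),\dots,\rho(u^Tp(x)-\gamma_K)\big)^T,$$ where $p(x)=(p^1(x),\dots,p^n(x))^T$, $u_s\in\mathbb{R}^d$, $\beta_{s,l},v_{s,l}\in\mathbb{R}$, $u\in\mathbb{R}^n$, $\gamma_i\in\mathbb{R}$, $W\in\mathbb{R}^{K\times c}$ (so $n(d+1)+2\sum_{s=1}^n k_s+(c+1)\prod_{s=1}^n k_s$ parameters), which classifies perfectly: with probability $1$ over $(x,y)\sim D$, $y$ is the unique maximizer of $j\mapsto g_j(x)$ over $j\in\{1,\dots,c\}$.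
   Context: $\rho(t)=1/(1+e^{-t})$ is the sigmoid function. Definition ($(k_1,\dots,k_n)$-separable with $\delta$-margin): Let $\mathcal{X}\subset\mathbb{R}^d$, $\mathcal{Y}=\{1,\dots,c\}$. A distribution $D$ over $\mathcal{X}\times\mathcal{Y}$ is $(k_1,\dots,k_n)$-separable with $\delta$-margin ($\delta>0$) if there exist $a_1,\dots,a_n\in\mathbb{R}^d$ with $\|a_s\|_2=1$ and constants $b_{s,1}<b_{s,2}<\cdots<b_{s,k_s+1}$ for each $s\in\{1,\dots,n\}$ such that, for each multi-index $\mathbf{i}=(i_1,\dots,i_n)$ with $i_s\in\{1,\dots,k_s\}$ and $\mathcal{X}_{\mathbf{i}}=\{x\in\mathcal{X}: b_{s,i_s}+\delta<a_s^Tx<b_{s,i_s+1}-\delta \text{ for all } 1\le s\le n\}$: (i) there is $y_{\mathbf{i}}\in\mathcal{Y}$ with $\mathbb{P}_{(x,y)\sim D}(y=y_{\mathbf{i}}\mid x\in\mathcal{X}_{\mathbf{i}})=1$; (ii) $\mathbb{P}_{(x,y)\sim D}\big(x\in\bigcup_{\mathbf{i}}\mathcal{X}_{\mathbf{i}}\big)=1$. *)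

From Stdlib Require Import Reals Lra Lia.
Open Scope R_scope.

Definition rho (t : R) : R := 1 / (1 + exp (- t)).

(* 1-based finite sums / products: sumR m f = f 1 + ... + f m *)
Fixpoint sumR (m : nat) (f : nat -> R) : R :=
  match m with O => 0 | S m' => sumR m' f + f m end.
Fixpoint prodN (m : nat) (f : nat -> nat) : nat :=
  match m with O => 1%nat | S m' => (prodN m' f * f m)%nat end.

(* Points of R^d are functions nat -> R of which coordinates 1..d are used. *)
Definition dot (d : nat) (a x : nat -> R) : R := sumR d (fun i => a i * x i).
Definition norm2 (d : nat) (a : nat -> R) : R := sqrt (dot d a a).

Definition set (T : Type) := T -> Prop.

Record ProbSpace (T : Type) := {
  measurable : set T -> Prop;
  prob : set T -> R;
  meas_full : measurable (fun _ => True);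
  meas_compl : forall A, measurable A -> measurable (fun z => ~ A z);
  meas_cunion : forall F : nat -> set T, (forall n, measurable (F n)) ->
      measurable (fun z => exists n, F n z);
  prob_nonneg : forall A, measurable A -> 0 <= prob A;
  prob_full : prob (fun _ => True) = 1;
  prob_sigma_add : forall F : nat -> set T, (forall n, measurable (F n)) ->
      (forall m n z, m <> n -> F m z -> F n z -> False) ->
      infinite_sum (fun n => prob (F n)) (prob (fun z => exists n, F n z))
}.
Arguments measurable {T} _ _.
Arguments prob {T} _ _.

Definition almost_surely {T} (D : ProbSpace T) (P : T -> Prop) : Prop :=
  exists N, measurable D N /\ prob D N = 0 /\ forall z, ~ P z -> N z.

(* Samples (x, y): x in R^d (coordinates 1..d), label y in {1,...,c}. *)
Definition sample := ((nat -> R) * nat)%type.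

Definition valid_index (n : nat) (k : nat -> nat) (idx : nat -> nat) : Prop :=
  forall s, (1 <= s <= n)%nat -> (1 <= idx s <= k s)%nat.

Definition cell (d n : nat) (X : (nat -> R) -> Prop) (a : nat -> nat -> R)
  (b : nat -> nat -> R) (delta : R) (idx : nat -> nat) (x : nat -> R) : Prop :=
  X x /\ forall s, (1 <= s <= n)%nat ->
    b s (idx s) + delta < dot d (a s) x < b s (S (idx s)) - delta.

Definition separable (d c n : nat) (X : (nat -> R) -> Prop) (D : ProbSpace sample)
  (k : nat -> nat) (delta : R) : Prop :=
  0 < delta /\
  exists (a : nat -> nat -> R) (b : nat -> nat -> R),
    (forall s, (1 <= s <= n)%nat -> norm2 d (a s) = 1) /\
    (forall s l, (1 <= s <= n)%nat -> (1 <= l <= k s)%nat -> b s l < b s (S l)) /\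
    (forall idx, valid_index n k idx ->
       exists yi, (1 <= yi <= c)%nat /\
         almost_surely D (fun z => cell d n X a b delta idx (fst z) -> snd z = yi)) /\
    almost_surely D (fun z => exists idx, valid_index n k idx /\ cell d n X a b delta idx (fst z)).

Definition net_p (d : nat) (k : nat -> nat) (us : nat -> nat -> R)
  (beta v : nat -> nat -> R) (s : nat) (x : nat -> R) : R :=
  sumR (k s) (fun l => v s l * rho (dot d (us s) x - beta s l)).

Definition net_g (d n K : nat) (k : nat -> nat) (us : nat -> nat -> R)
  (beta v : nat -> nat -> R) (u : nat -> R) (gamma : nat -> R)
  (W : nat -> nat -> R) (j : nat) (x : nat -> R) : R :=
  sumR K (fun i => W i j *
     rho (sumR n (fun s => u s * net_p d k us beta v s x) - gamma i)).

From Stdlib Require Import Reals Lra Lia Classical FunctionalExtensionality PropExtensionality.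
Open Scope R_scope.

(* The cells [X_i] of a separable distribution are indexed by multi-indices
   [i = (i_1,...,i_n)].  Block [s] of the first layer is a sharp staircase
   [sum_l rho (lam (a_s.x - b_(s,l)))] counting the thresholds below [a_s.x];
   on [X_i] it equals [i_s] up to an exponentially small error.  Weighting the
   blocks by the place values [k_1...k_(s-1)] yields the mixed-radix code of
   [i] plus a constant, up to 1/4.  A second staircase of [K = prod k_s]
   sigmoids then fires exactly on the units [1..code+1], and the telescoping
   output weights [W_i = e(i) - e(i-1)], with [e(i)] the one-hot vector of the
   label of the cell of code [i-1], turn it into the one-hot vector of that
   label, up to 1/4.  Both approximation steps are instances of one lemma,
   [sigmoid_staircase].  On the probabilistic side we only need that finite
   unions of null sets are null, which gives one label per code almost surely
   ([cell_labels]); [corollary2] combines the two halves. *)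

Lemma sumR_ext n f g :
  (forall i, (1 <= i <= n)%nat -> f i = g i) -> sumR n f = sumR n g.
Proof.
  induction n as [|n IH]; simpl; intros H; [reflexivity|].
  rewrite IH by (intros; apply H; lia). rewrite H by lia; reflexivity.
Qed.

Lemma sumR_scal n c f : sumR n (fun i => c * f i) = c * sumR n f.
Proof. induction n as [|n IH]; simpl; [ring|]. rewrite IH; ring. Qed.

Lemma sumR_le n f g :
  (forall i, (1 <= i <= n)%nat -> f i <= g i) -> sumR n f <= sumR n g.
Proof.
  induction n as [|n IH]; simpl; intros H; [lra|].
  apply Rplus_le_compat; [apply IH; intros; apply H|apply H]; lia.
Qed.

Lemma sumR_const n c : sumR n (fun _ => c) = INR n * c.
Proof. induction n as [|n IH]; simpl sumR; [simpl; ring|]. rewrite IH, S_INR; ring. Qed.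

Lemma sumR_nonneg n f : (forall i, (1 <= i <= n)%nat -> 0 <= f i) -> 0 <= sumR n f.
Proof.
  intros H. replace 0 with (sumR n (fun _ => 0)) by (rewrite sumR_const; ring).
  now apply sumR_le.
Qed.

Lemma sumR_err n (c f g e : nat -> R) :
  (forall i, (1 <= i <= n)%nat -> Rabs (f i - g i) <= e i) ->
  Rabs (sumR n (fun i => c i * f i) - sumR n (fun i => c i * g i))
    <= sumR n (fun i => Rabs (c i) * e i).
Proof.
  induction n as [|n IH]; simpl; intros H.
  - rewrite Rminus_0_r, Rabs_R0; lra.
  - replace (sumR n (fun i => c i * f i) + c (S n) * f (S n)
               - (sumR n (fun i => c i * g i) + c (S n) * g (S n)))
      with ((sumR n (fun i => c i * f i) - sumR n (fun i => c i * g i))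
            + c (S n) * (f (S n) - g (S n))) by ring.
    eapply Rle_trans; [apply Rabs_triang|]. rewrite Rabs_mult.
    apply Rplus_le_compat.
    + apply IH; intros; apply H; lia.
    + apply Rmult_le_compat_l; [apply Rabs_pos|apply H; lia].
Qed.

Lemma Rabs_le_bounds x e : Rabs x <= e -> - e <= x <= e.
Proof. unfold Rabs; destruct (Rcase_abs x); lra. Qed.

Definition step (r l : nat) : R := if (l <=? r)%nat then 1 else 0.

Lemma sumR_step_telescope m r (f : nat -> R) :
  sumR m (fun l => (f l - f (l - 1)%nat) * step r l) = f (Nat.min m r) - f O.
Proof.
  induction m as [|m IH]; simpl sumR; [simpl; ring|]. rewrite IH. unfold step.
  destruct (Nat.leb_spec (S m) r).
  - rewrite !Nat.min_l by lia. rewrite Nat.sub_0_r. ring.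
  - rewrite !Nat.min_r by lia. ring.
Qed.

Lemma sumR_step_count m r : sumR m (fun l => 1 * step r l) = INR (Nat.min m r).
Proof.
  rewrite <- (Rminus_0_r (INR _)), <- sumR_step_telescope.
  apply sumR_ext; intros l Hl. f_equal.
  rewrite minus_INR by lia. simpl. ring.
Qed.

Lemma exp_le a b : a <= b -> exp a <= exp b.
Proof. intros [H|H]; [left; now apply exp_increasing|subst; lra]. Qed.

Lemma rho_near_one t A : A <= t -> Rabs (rho t - 1) <= exp (- A).
Proof.
  intros H. unfold rho. pose proof (exp_pos (- t)) as Hw. set (w := exp (- t)) in *.
  replace (1 / (1 + w) - 1) with (- (w / (1 + w))) by (field; lra).
  rewrite Rabs_Ropp, Rabs_right by (apply Rle_ge, Rlt_le, Rdiv_lt_0_compat; lra).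
  apply Rle_trans with w; [|apply exp_le; lra].
  apply (Rmult_le_reg_r (1 + w)); [lra|]. field_simplify; nra.
Qed.

Lemma rho_near_zero t A : t <= - A -> Rabs (rho t - 0) <= exp (- A).
Proof.
  intros H. unfold rho. rewrite Rminus_0_r, exp_Ropp.
  pose proof (exp_pos t) as He. set (E := exp t) in *.
  replace (1 / (1 + / E)) with (E / (E + 1)) by (field; lra).
  rewrite Rabs_right by (apply Rle_ge, Rlt_le, Rdiv_lt_0_compat; lra).
  apply Rle_trans with E; [|apply exp_le; lra].
  apply (Rmult_le_reg_r (E + 1)); [lra|]. field_simplify; nra.
Qed.

Lemma sigmoid_staircase m r (c theta : nat -> R) t A :
  (forall l, (1 <= l <= m)%nat -> (l <= r)%nat -> A <= t - theta l) ->
  (forall l, (1 <= l <= m)%nat -> (r < l)%nat -> t - theta l <= - A) ->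
  Rabs (sumR m (fun l => c l * rho (t - theta l)) - sumR m (fun l => c l * step r l))
    <= sumR m (fun l => Rabs (c l)) * exp (- A).
Proof.
  intros Hright Hleft.
  eapply Rle_trans; [apply sumR_err with (e := fun _ => exp (- A))|].
  - intros l Hl. unfold step. destruct (Nat.leb_spec l r).
    + apply rho_near_one, Hright; auto.
    + apply rho_near_zero, Hleft; auto.
  - rewrite Rmult_comm, <- sumR_scal. apply Req_le, sumR_ext; intros; ring.
Qed.

Section AlmostSure.
Context {T : Type} (D : ProbSpace T).

Lemma set_ext (A B : set T) : (forall z, A z <-> B z) -> A = B.
Proof.
  intros H; apply functional_extensionality; intros z.
  apply propositional_extensionality; auto.
Qed.

Lemma measurable_empty : measurable D (fun _ => False).
Proof.
  replace (fun _ : T => False) with (fun z : T => ~ (fun _ : T => True) z).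
  - apply meas_compl, meas_full.
  - apply set_ext; tauto.
Qed.

Lemma measurable_union A B :
  measurable D A -> measurable D B -> measurable D (fun z => A z \/ B z).
Proof.
  intros HA HB.
  set (F := fun n : nat => match n with O => A | _ => B end).
  replace (fun z => A z \/ B z) with (fun z => exists n, F n z).
  - apply meas_cunion. intros [|n]; auto.
  - apply set_ext; intros z; split.
    + intros [[|n] H]; auto.
    + intros [H|H]; [exists O|exists 1%nat]; auto.
Qed.

Lemma measurable_diff A B :
  measurable D A -> measurable D B -> measurable D (fun z => A z /\ ~ B z).
Proof.
  intros HA HB.
  replace (fun z => A z /\ ~ B z) with (fun z => ~ (fun z => ~ A z \/ B z) z).
  - apply meas_compl, measurable_union; auto. now apply meas_compl.
  - apply set_ext; intros z; simpl; tauto.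
Qed.

(* Countable additivity applied to the constant family of empty sets forces
   [prob (empty) * (N + 1)] to converge to [prob (empty)]. *)
Lemma prob_empty : prob D (fun _ => False) = 0.
Proof.
  pose proof (prob_sigma_add _ D (fun _ _ => False) (fun _ => measurable_empty)
                ltac:(tauto)) as H.
  cbv beta in H.
  replace (fun z : T => exists _ : nat, False) with (fun _ : T => False) in H
    by (apply set_ext; firstorder).
  set (p := prob D (fun _ => False)) in *.
  assert (Hpartial : forall N, sum_f_R0 (fun _ => p) N = INR (S N) * p).
  { induction N as [|N IH]; simpl sum_f_R0; [simpl; ring|].
    rewrite IH, (S_INR (S N)); ring. }
  destruct (Req_dec p 0) as [|Hp]; [assumption|exfalso].
  apply Rabs_pos_lt in Hp.
  destruct (H (Rabs p / 2)) as [N HN]; [lra|].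
  specialize (HN (S N) ltac:(lia)). unfold Rdist in HN.
  rewrite Hpartial, !S_INR in HN.
  replace ((INR N + 1 + 1) * p - p) with ((INR N + 1) * p) in HN by ring.
  rewrite Rabs_mult, (Rabs_right (INR N + 1)) in HN
    by (pose proof (pos_INR N); lra).
  pose proof (pos_INR N). nra.
Qed.

Lemma prob_disjoint_union A B :
  measurable D A -> measurable D B -> (forall z, A z -> B z -> False) ->
  prob D (fun z => A z \/ B z) = prob D A + prob D B.
Proof.
  intros HA HB Hdisj.
  set (F := fun n : nat => match n with O => A | 1%nat => B | _ => fun _ => False end).
  assert (HF : forall n, measurable D (F n))
    by (intros [|[|n]]; simpl; auto using measurable_empty).
  pose proof (prob_sigma_add _ D F HF) as H.
  replace (fun z => exists n, F n z) with (fun z => A z \/ B z) in H.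
  2:{ apply set_ext; intros z; split.
      - intros [Hz|Hz]; [exists O|exists 1%nat]; auto.
      - intros [[|[|n]] Hz]; simpl in Hz; tauto. }
  apply (uniqueness_sum (fun n => prob D (F n))).
  - apply H. intros [|[|m]] [|[|m']] z Hmm' H1 H2; simpl in *; eauto.
  - intros eps Heps. exists 1%nat. intros [|N] HN; [lia|].
    replace (sum_f_R0 (fun n => prob D (F n)) (S N)) with (prob D A + prob D B).
    + unfold Rdist. rewrite Rminus_diag, Rabs_R0; lra.
    + induction N as [|N IH]; [reflexivity|].
      simpl sum_f_R0 in *. rewrite <- IH by lia. simpl. rewrite prob_empty. ring.
Qed.

Lemma prob_mono A B :
  measurable D A -> measurable D B -> (forall z, A z -> B z) -> prob D A <= prob D B.
Proof.
  intros HA HB Hsub.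
  replace B with (fun z => A z \/ (B z /\ ~ A z)).
  - rewrite prob_disjoint_union by (auto using measurable_diff; tauto).
    pose proof (prob_nonneg _ D _ (measurable_diff B A HB HA)). lra.
  - apply set_ext; intros z; split; [intros [Hz|[Hz _]]; auto|].
    intros Hz; destruct (classic (A z)); auto.
Qed.

Lemma null_union A B :
  measurable D A -> prob D A = 0 -> measurable D B -> prob D B = 0 ->
  prob D (fun z => A z \/ B z) = 0.
Proof.
  intros HA HA0 HB HB0.
  replace (fun z => A z \/ B z) with (fun z => A z \/ (B z /\ ~ A z)).
  - rewrite prob_disjoint_union by (auto using measurable_diff; tauto).
    pose proof (prob_mono _ _ (measurable_diff B A HB HA) HB (fun z Hz => proj1 Hz)).
    pose proof (prob_nonneg _ D _ (measurable_diff B A HB HA)). lra.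
  - apply set_ext; intros z; split; [tauto|].
    intros [Hz|Hz]; [auto|]. destruct (classic (A z)); auto.
Qed.

Lemma ae_true : almost_surely D (fun _ => True).
Proof.
  exists (fun _ => False). split; [apply measurable_empty|].
  split; [apply prob_empty|tauto].
Qed.

Lemma ae_impl (P Q : T -> Prop) :
  almost_surely D P -> (forall z, P z -> Q z) -> almost_surely D Q.
Proof.
  intros [N [HN [HN0 HPN]]] HPQ. exists N; repeat split; auto.
Qed.

Lemma ae_and (P Q : T -> Prop) :
  almost_surely D P -> almost_surely D Q -> almost_surely D (fun z => P z /\ Q z).
Proof.
  intros [N [HN [HN0 HPN]]] [M [HM [HM0 HQM]]].
  exists (fun z => N z \/ M z). repeat split.
  - now apply measurable_union.
  - now apply null_union.
  - intros z Hz. destruct (classic (P z)) as [HPz|HPz]; [right|left]; auto.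
Qed.

Lemma ae_finite_choice {Y : Type} (y0 : Y) (P : nat -> Y -> T -> Prop) K :
  (forall m, (m < K)%nat -> exists y, almost_surely D (P m y)) ->
  exists f : nat -> Y, almost_surely D (fun z => forall m, (m < K)%nat -> P m (f m) z).
Proof.
  induction K as [|K IH]; intros H.
  - exists (fun _ => y0). apply ae_impl with (1 := ae_true). intros; lia.
  - destruct IH as [f Hf]; [intros m Hm; apply H; lia|].
    destruct (H K ltac:(lia)) as [y Hy].
    exists (fun m => if (m =? K)%nat then y else f m).
    apply ae_impl with (1 := ae_and _ _ Hf Hy). intros z [Hfz Hyz] m Hm.
    destruct (Nat.eqb_spec m K) as [->|Hne]; auto.
    apply Hfz; lia.
Qed.

End AlmostSure.

Fixpoint code (n : nat) (k idx : nat -> nat) : nat :=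
  match n with
  | O => O
  | S n' => (code n' k idx + (idx n - 1) * prodN n' k)%nat
  end.

Lemma valid_index_pred n k idx : valid_index (S n) k idx -> valid_index n k idx.
Proof. intros H s Hs; apply H; lia. Qed.

Lemma code_bound n k idx : valid_index n k idx -> (code n k idx < prodN n k)%nat.
Proof.
  induction n as [|n IH]; simpl; intros H; [lia|].
  specialize (IH (valid_index_pred _ _ _ H)). specialize (H (S n) ltac:(lia)). nia.
Qed.

Lemma code_inj n k idx idx' : valid_index n k idx -> valid_index n k idx' ->
  code n k idx = code n k idx' -> forall s, (1 <= s <= n)%nat -> idx s = idx' s.
Proof.
  induction n as [|n IH]; simpl; intros H H' E s Hs; [lia|].
  pose proof (code_bound _ _ _ (valid_index_pred _ _ _ H)) as Hc.
  pose proof (code_bound _ _ _ (valid_index_pred _ _ _ H')) as Hc'.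
  pose proof (H (S n) ltac:(lia)). pose proof (H' (S n) ltac:(lia)).
  (* the last digit is the quotient of the code by [k_1 ... k_n] *)
  assert (Hdigit : (idx (S n) - 1 = idx' (S n) - 1)%nat).
  { set (q := (idx (S n) - 1)%nat) in *. set (q' := (idx' (S n) - 1)%nat) in *.
    rewrite (Nat.div_unique (code n k idx + q * prodN n k) _ q _ Hc) by nia.
    rewrite (Nat.div_unique (code n k idx' + q' * prodN n k) _ q' _ Hc') by nia.
    now rewrite E. }
  destruct (Nat.eq_dec s (S n)) as [->|Hne]; [lia|].
  apply IH; [exact (valid_index_pred _ _ _ H)|exact (valid_index_pred _ _ _ H')| |lia].
  rewrite Hdigit in E; lia.
Qed.

Definition radix (k : nat -> nat) (s : nat) : R := INR (prodN (s - 1) k).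

Lemma radix_sum_code n k idx : valid_index n k idx ->
  sumR n (fun s => radix k s * INR (idx s))
  = INR (code n k idx) + sumR n (radix k).
Proof.
  unfold radix. induction n as [|n IH]; simpl; intros H; [ring|].
  rewrite IH by exact (valid_index_pred _ _ _ H).
  pose proof (H (S n) ltac:(lia)).
  rewrite Nat.sub_0_r, plus_INR, mult_INR, minus_INR by lia. simpl (INR 1). ring.
Qed.

Lemma thresholds_mono (b : nat -> R) m :
  (forall l, (1 <= l <= m)%nat -> b l < b (S l)) ->
  forall l l', (1 <= l)%nat -> (l <= l')%nat -> (l' <= S m)%nat -> b l <= b l'.
Proof.
  intros H l l' H1 H2 H3. induction l' as [|l' IH]; [lia|].
  destruct (Nat.eq_dec l (S l')) as [->|Hne]; [lra|].
  apply Rle_trans with (b l'); [apply IH; lia|left; apply H; lia].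
Qed.

Lemma dot_scal d lam (a x : nat -> R) : dot d (fun i => lam * a i) x = lam * dot d a x.
Proof. unfold dot. rewrite <- sumR_scal. apply sumR_ext; intros; ring. Qed.

Section Network.
(* The separating directions [a_s], thresholds [b_(s,l)] and margin [delta],
   together with a labelling [lab] of the cells indexed by their codes. *)
Variables (d n : nat) (k : nat -> nat) (a b : nat -> nat -> R) (delta : R)
  (lab : nat -> nat).
Hypothesis delta_pos : 0 < delta.
Hypothesis b_incr :
  forall s l, (1 <= s <= n)%nat -> (1 <= l <= k s)%nat -> b s l < b s (S l).

Let K := prodN n k.
Let offset := sumR n (radix k).
Let spread := sumR n (fun s => radix k s * INR (k s)).

(* Sharpness of the first and of the second hidden layer: they make the
   total sigmoid error of each layer at most 1/4. *)
Definition lam : R := ln (4 * (spread + 1)) / delta.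
Definition mu : R := 4 * ln (4 * (INR K + 1)).

(* Neuron [l] of block [s] fires when
   [a_s . x > b_(s,l)], so block [s] counts the thresholds below [a_s . x], i.e.
   returns [i_s] on the cell [X_i]; [u] forms the code of [i]; hidden unit [i]
   of the second layer fires iff [i <= code + 1]; and the telescoping output
   weights turn these staircases into the one-hot vector of the label. *)
Definition net_us (s i : nat) : R := lam * a s i.
Definition net_beta (s l : nat) : R := lam * b s l.
Definition net_v (s l : nat) : R := 1.
Definition net_u (s : nat) : R := mu * radix k s.
Definition net_gamma (i : nat) : R := mu * (offset + INR i - 3 / 2).
Definition cell_label (i : nat) : nat := match i with O => O | S m => lab m end.
Definition onehot (i j : nat) : R := if (cell_label i =? j)%nat then 1 else 0.
Definition net_W (i j : nat) : R := onehot i j - onehot (i - 1) j.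

Lemma spread_nonneg : 0 <= spread.
Proof. apply sumR_nonneg; intros. apply Rmult_le_pos; apply pos_INR. Qed.

Lemma lam_pos : 0 < lam.
Proof.
  pose proof spread_nonneg. apply Rdiv_lt_0_compat; [|assumption].
  rewrite <- ln_1. apply ln_increasing; lra.
Qed.

Lemma first_layer_error : spread * exp (- (lam * delta)) <= 1 / 4.
Proof.
  pose proof spread_nonneg.
  replace (- (lam * delta)) with (ln (/ (4 * (spread + 1))))
    by (unfold lam; rewrite ln_Rinv by lra; field; lra).
  rewrite exp_ln by (apply Rinv_0_lt_compat; lra).
  apply (Rmult_le_reg_r (4 * (spread + 1))); [lra|]. field_simplify; lra.
Qed.

Lemma second_layer_error : INR K * exp (- (mu / 4)) < 1 / 4.
Proof.
  pose proof (pos_INR K).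
  replace (- (mu / 4)) with (ln (/ (4 * (INR K + 1))))
    by (unfold mu; rewrite ln_Rinv by lra; field).
  rewrite exp_ln by (apply Rinv_0_lt_compat; lra).
  apply (Rmult_lt_reg_r (4 * (INR K + 1))); [lra|]. field_simplify; lra.
Qed.

Let p (s : nat) (x : nat -> R) : R := net_p d k net_us net_beta net_v s x.

Section OnCell.
Variables (idx : nat -> nat) (x : nat -> R).
Hypothesis idx_valid : valid_index n k idx.
Hypothesis x_margin : forall s, (1 <= s <= n)%nat ->
  b s (idx s) + delta < dot d (a s) x < b s (S (idx s)) - delta.

Lemma block_counts s : (1 <= s <= n)%nat ->
  Rabs (p s x - INR (idx s)) <= INR (k s) * exp (- (lam * delta)).
Proof.
  intros Hs. pose proof (idx_valid s Hs) as Hi. pose proof (x_margin s Hs) as Hm.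
  pose proof lam_pos.
  rewrite <- (Nat.min_r (k s) (idx s)), <- sumR_step_count by lia.
  replace (INR (k s)) with (sumR (k s) (fun _ => Rabs 1))
    by (rewrite sumR_const, Rabs_R1; ring).
  unfold p, net_p.
  apply (sigmoid_staircase (k s) (idx s) (fun _ => 1) (net_beta s)
           (dot d (net_us s) x) (lam * delta)); intros l Hl Hlr;
    unfold net_us, net_beta; rewrite dot_scal.
  - assert (b s l <= b s (idx s)) by (apply (thresholds_mono (b s) (k s)); auto; lia).
    nra.
  - assert (b s (S (idx s)) <= b s l)
      by (apply (thresholds_mono (b s) (k s)); auto; lia).
    nra.
Qed.

Lemma code_estimate :
  Rabs (sumR n (fun s => radix k s * p s x) - (INR (code n k idx) + offset)) <= 1 / 4.
Proof.
  unfold offset. rewrite <- radix_sum_code by exact idx_valid.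
  eapply Rle_trans;
    [apply sumR_err with (e := fun s => INR (k s) * exp (- (lam * delta))),
       block_counts|].
  eapply Rle_trans; [|apply first_layer_error].
  unfold spread. rewrite (Rmult_comm (sumR _ _)), <- sumR_scal.
  apply Req_le, sumR_ext; intros s _.
  unfold radix. rewrite Rabs_right by (apply Rle_ge, pos_INR). ring.
Qed.

Lemma network_output j : (1 <= j)%nat ->
  Rabs (net_g d n K k net_us net_beta net_v net_u net_gamma net_W j x
        - onehot (S (code n k idx)) j) < 1 / 4.
Proof.
  intros Hj. pose proof (code_bound _ _ _ idx_valid) as Hcode.
  pose proof (pos_INR K) as HK.
  assert (Hmu : 0 < mu).
  { unfold mu. apply Rmult_lt_0_compat; [lra|]. rewrite <- ln_1. apply ln_increasing; lra. }
  set (t := sumR n (fun s => radix k s * p s x)).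
  pose proof code_estimate as Ht. fold t in Ht. apply Rabs_le_bounds in Ht.
  assert (Hu : sumR n (fun s => net_u s * net_p d k net_us net_beta net_v s x)
               = mu * t).
  { unfold t, p. rewrite <- sumR_scal. apply sumR_ext; intros; unfold net_u; ring. }
  assert (Hhot : onehot (S (code n k idx)) j
                 = sumR K (fun i => net_W i j * step (S (code n k idx)) i)).
  { unfold net_W. rewrite sumR_step_telescope, Nat.min_r by (unfold K; lia).
    assert (onehot 0 j = 0) as ->
      by (unfold onehot; simpl cell_label; destruct (Nat.eqb_spec 0 j); [lia|reflexivity]).
    ring. }
  unfold net_g. rewrite Hu, Hhot.
  eapply Rle_lt_trans;
    [apply (sigmoid_staircase K (S (code n k idx)) (fun i => net_W i j) net_gamma
              (mu * t) (mu / 4)); intros i Hi Hir; unfold net_gamma|].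
  - assert (INR i <= INR (code n k idx) + 1) by (rewrite <- S_INR; apply le_INR; lia).
    nra.
  - assert (INR (code n k idx) + 2 <= INR i)
      by (replace 2 with (INR 2) by reflexivity; rewrite <- plus_INR; apply le_INR; lia).
    nra.
  - eapply Rle_lt_trans; [|apply second_layer_error].
    apply Rmult_le_compat_r; [left; apply exp_pos|].
    rewrite <- (Rmult_1_r (INR K)), <- sumR_const. apply sumR_le; intros i _.
    unfold net_W, onehot.
    destruct (Nat.eqb _ j), (Nat.eqb _ j);
      rewrite ?Rminus_0_r, ?Rminus_diag, ?Rabs_R0, ?Rabs_R1; try lra.
    rewrite Rabs_left; lra.
Qed.

Lemma network_argmax j :
  (1 <= j)%nat -> (1 <= lab (code n k idx))%nat -> j <> lab (code n k idx) ->
  net_g d n K k net_us net_beta net_v net_u net_gamma net_W j x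
  < net_g d n K k net_us net_beta net_v net_u net_gamma net_W (lab (code n k idx)) x.
Proof.
  intros Hj Hy Hne.
  pose proof (network_output j Hj) as Hout_j.
  pose proof (network_output _ Hy) as Hout_y.
  unfold onehot in Hout_j, Hout_y. simpl cell_label in Hout_j, Hout_y.
  rewrite Nat.eqb_refl in Hout_y.
  destruct (Nat.eqb_spec (lab (code n k idx)) j) as [E|_]; [congruence|].
  apply Rabs_def2 in Hout_j. apply Rabs_def2 in Hout_y. lra.
Qed.

End OnCell.
End Network.

Lemma cell_code d n X a b delta k idx idx' x :
  valid_index n k idx -> valid_index n k idx' -> code n k idx = code n k idx' ->
  cell d n X a b delta idx x -> cell d n X a b delta idx' x.
Proof.
  intros Hv Hv' Hc [HX Hm]. split; [exact HX|].
  intros s Hs. rewrite <- (code_inj n k idx idx' Hv Hv' Hc s Hs). auto.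
Qed.

(* Almost surely, the label of a sample is a function [lab] of the code of
   the cell containing it: one label per code, chosen among finitely many. *)
Lemma cell_labels d c n X (D : ProbSpace sample) k a b delta :
  (forall idx, valid_index n k idx -> exists yi, (1 <= yi <= c)%nat /\
     almost_surely D (fun z => cell d n X a b delta idx (fst z) -> snd z = yi)) ->
  exists lab : nat -> nat, almost_surely D (fun z =>
    forall idx, valid_index n k idx -> cell d n X a b delta idx (fst z) ->
      snd z = lab (code n k idx)).
Proof.
  intros Hlab.
  destruct (ae_finite_choice D O (fun m y z => forall idx, valid_index n k idx ->
              code n k idx = m -> cell d n X a b delta idx (fst z) -> snd z = y)
              (prodN n k)) as [lab Hl].
  - intros m _.
    destruct (classic (exists idx0, valid_index n k idx0 /\ code n k idx0 = m))
      as [[idx0 [Hv0 Hc0]]|Hnone].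
    + destruct (Hlab idx0 Hv0) as [y [_ Hy]]. exists y.
      apply ae_impl with (1 := Hy). intros z Hz idx Hv Hc Hcell.
      apply Hz, (cell_code d n X a b delta k idx idx0); auto; congruence.
    + exists O. apply ae_impl with (1 := ae_true D).
      intros z _ idx Hv Hc. exfalso; eauto.
  - exists lab. apply ae_impl with (1 := Hl). intros z Hz idx Hv Hcell.
    apply (Hz (code n k idx) (code_bound _ _ _ Hv) idx); auto.
Qed.

Theorem corollary2 (d c n : nat) (X : (nat -> R) -> Prop) (D : ProbSpace sample)
  (k : nat -> nat) (delta : R) :
  (1 <= c)%nat ->
  (forall s, (1 <= s <= n)%nat -> (1 <= k s)%nat) ->
  almost_surely D (fun z => X (fst z) /\ (1 <= snd z <= c)%nat) ->
  separable d c n X D k delta ->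
  exists (us : nat -> nat -> R) (beta v : nat -> nat -> R) (u gamma : nat -> R)
         (W : nat -> nat -> R),
    almost_surely D (fun z =>
      (1 <= snd z <= c)%nat /\
      forall j, (1 <= j <= c)%nat -> j <> snd z ->
        net_g d n (prodN n k) k us beta v u gamma W j (fst z)
        < net_g d n (prodN n k) k us beta v u gamma W (snd z) (fst z)).
Proof.
  intros _ _ Hdom [Hdelta [a [b [_ [Hb [Hlab Hcover]]]]]].
  destruct (cell_labels d c n X D k a b delta Hlab) as [lab Hlabel].
  exists (net_us n k a delta), (net_beta n k b delta), net_v, (net_u n k),
    (net_gamma n k), (net_W lab).
  apply ae_impl with (1 := ae_and D _ _ (ae_and D _ _ Hdom Hcover) Hlabel).
  intros z [[[_ Hy] [idx [Hv Hcell]]] Hz]. split; [exact Hy|].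
  intros j Hj Hne. rewrite (Hz idx Hv Hcell) in *.
  apply network_argmax with (delta := delta); try apply Hcell; auto; lia.
Qed.
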